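(* Let $q$ be a prime power, let $p\ge2$ be an integer, let $d\in\{1,\dots,p-1\}$, and fix vectors $x_{d+1},\dots,x_p\in\mathbb{F}_q^d\setminus\{0\}$. For $v_1,\dots,v_d\in\mathbb{F}_q^n$ define $v_i=\sum_{j=1}^dx_i(j)v_j$ for $i=d+1,\dots,p$. Then for every function $f:\mathbb{F}_q^n\to[0,\infty)$, $$\frac{1}{q^{nd}}\sum_{v_1,\dots,v_d\in\mathbb{F}_q^n}f(v_1)f(v_2)\cdots f(v_p)\le\|f\|_1^{d-1}\|f\|_{p-d+1}^{p-d+1}.$$
   Context: For $f:\mathbb{F}_q^n\to\mathbb{R}$ and $r\in(0,\infty)$, $\|f\|_r=\big(q^{-n}\sum_{x\in\mathbb{F}_q^n}|f(x)|^r\big)^{1/r}$. $x_i(j)$ denotes the $j$-th coordinate of $x_i$. *)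

From mathcomp Require Import all_boot all_order all_algebra all_field.
From mathcomp Require Import reals exp.
Set Implicit Arguments. Unset Strict Implicit. Unset Printing Implicit Defensive.
Import Order.TTheory GRing.Theory Num.Theory.
Local Open Scope ring_scope.

Definition fin_Lnorm (R : realType) (F : finFieldType) (n : nat)
  (f : 'rV[F]_n -> R) (r : R) : R :=
  powR ((#|F|%:R ^- n) * \sum_(x : 'rV[F]_n) powR `|f x| r) r^-1.

From mathcomp Require Import all_boot all_order all_algebra all_field.
From mathcomp Require Import reals exp.

Set Implicit Arguments.
Unset Strict Implicit.
Unset Printing Implicit Defensive.
Import Order.TTheory GRing.Theory Num.Theory.
Local Open Scope ring_scope.

(* Write k = p - d.  By AM-GM, f(v_{d+1}) ... f(v_p) <= (1/k) sum_i f(v_i)^k,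
   so it suffices to bound, for a single nonzero coefficient vector c with
   c_{j0} != 0 and w = sum_j c_j v_j, the sum over v of
   f(v_1) ... f(v_d) f(w)^k.  Young's inequality
   f(v_{j0}) f(w)^k <= (f(v_{j0})^(k+1) + k f(w)^(k+1)) / (k+1)
   splits it into two sums which are equal, because v_{j0} |-> w is a
   bijection of (F_q^n)^d fixing the other coordinates; each equals
   (sum f)^(d-1) (sum f^(k+1)). *)

Lemma prod_le_mean_exp (R : realFieldType) (m : nat) (E : 'I_m -> R) :
  (0 < m)%N -> (forall i, 0 <= E i) ->
  \prod_i E i <= (\sum_i E i ^+ m) / m%:R.
Proof.
move=> m_gt0 E_ge0.
have [AGM _] := @leif_AGM R _ predT (fun i => E i ^+ m)
  (fun i _ => exprn_ge0 _ (E_ge0 i)).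
move: AGM; rewrite card_ord prodrXl => AGM.
rewrite -(@ler_pXn2r _ m m_gt0) ?nnegrE ?prodr_ge0 //.
by rewrite divr_ge0 // sumr_ge0 // => i _; rewrite exprn_ge0.
Qed.

Lemma young_exp (R : realFieldType) (k : nat) (a b : R) : 0 <= a -> 0 <= b ->
  a * b ^+ k <= (a ^+ k.+1 + b ^+ k.+1 *+ k) / k.+1%:R.
Proof.
move=> a_ge0 b_ge0.
have := @prod_le_mean_exp R k.+1 (fun i => if i == ord0 then a else b).
rewrite !big_ord_recl /= prodr_const sumr_const !card_ord; apply=> // i.
by case: ifP.
Qed.

Lemma sum_ffun_mul_prod_neq (R : comPzSemiRingType) (T : finType) (d : nat)
  (G f : T -> R) (j0 : 'I_d) :
  \sum_(v : {ffun 'I_d -> T}) (G (v j0) * \prod_(j | j != j0) f (v j))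
  = (\sum_u G u) * (\sum_u f u) ^+ d.-1.
Proof.
have -> : (\sum_u G u) * (\sum_u f u) ^+ d.-1 =
    \prod_j \sum_u (if j == j0 then G u else f u).
  rewrite (bigD1 j0) //= eqxx; congr (_ * _).
  under [RHS]eq_bigr => j /negbTE neq_j do rewrite neq_j.
  by rewrite (prodr_const (predC1 j0)) cardC1 card_ord.
rewrite bigA_distr_bigA; apply: eq_bigr => v _.
rewrite [RHS](bigD1 j0) //= eqxx; congr (_ * _).
by apply: eq_bigr => j /negbTE ->.
Qed.

Section Shear.

Variables (F : fieldType) (V : lmodType F) (d : nat) (j0 : 'I_d) (c : 'I_d -> F).

Definition shear (v : {ffun 'I_d -> V}) : {ffun 'I_d -> V} :=
  [ffun j => if j == j0 then \sum_i c i *: v i else v j].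

Lemma shear_inj : c j0 != 0 -> injective shear.
Proof.
move=> c_j0 v w /ffunP shear_vw; apply/ffunP => j.
have same_off i : i != j0 -> v i = w i.
  by move=> neq_i; have := shear_vw i; rewrite !ffunE (negbTE neq_i).
have [->|/same_off //] := eqVneq j j0.
have := shear_vw j0; rewrite !ffunE eqxx (bigD1 j0) // [X in _ = X](bigD1 j0) //=.
rewrite (eq_bigr (fun i => c i *: w i)) => [|i /same_off -> //].
by move/addIr/(scalerI c_j0).
Qed.

End Shear.

Lemma sum_lincomb_mul_prod_neq (R : comPzSemiRingType) (F : finFieldType)
  (V : finLmodType F) (d : nat) (G f : V -> R) (j0 : 'I_d) (c : 'I_d -> F) :
  c j0 != 0 ->
  \sum_(v : {ffun 'I_d -> V})
     (G (\sum_j c j *: v j) * \prod_(j | j != j0) f (v j))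
  = \sum_(v : {ffun 'I_d -> V}) (G (v j0) * \prod_(j | j != j0) f (v j)).
Proof.
move=> c_j0; rewrite [RHS](reindex_inj (shear_inj c_j0)) /=.
apply: eq_bigr => v _; rewrite ffunE eqxx; congr (_ * _).
by apply: eq_bigr => j /negbTE neq_j; rewrite ffunE neq_j.
Qed.

Lemma sum_prod_mul_lincombX_le (R : realFieldType) (F : finFieldType)
  (n d k : nat) (f : 'rV[F]_n -> R) (c : 'rV[F]_d) :
  (forall u, 0 <= f u) -> c != 0 ->
  \sum_(v : {ffun 'I_d -> 'rV[F]_n})
     ((\prod_j f (v j)) * f (\sum_j c 0 j *: v j) ^+ k)
  <= (\sum_u f u) ^+ d.-1 * \sum_u f u ^+ k.+1.
Proof.
move=> f_ge0 c_neq0.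
have [j0 c_j0] : exists j0, c 0 j0 != 0.
  apply/existsP; apply: contraNT c_neq0 => /existsPn c0.
  by apply/eqP/rowP => j; rewrite mxE; apply/eqP/negPn/c0.
pose w (v : {ffun 'I_d -> 'rV[F]_n}) := \sum_j c 0 j *: v j.
pose P (v : {ffun 'I_d -> 'rV[F]_n}) := \prod_(j | j != j0) f (v j).
pose S := (\sum_u f u ^+ k.+1) * (\sum_u f u) ^+ d.-1.
have sum_P_j0 : \sum_(v : {ffun 'I_d -> 'rV[F]_n}) f (v j0) ^+ k.+1 * P v = S.
  by rewrite /P (sum_ffun_mul_prod_neq (fun u => f u ^+ k.+1)).
have sum_P_w : \sum_(v : {ffun 'I_d -> 'rV[F]_n}) f (w v) ^+ k.+1 * P v = S.
  by rewrite -sum_P_j0 /w (sum_lincomb_mul_prod_neq (fun u => f u ^+ k.+1)).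
apply: (@le_trans _ _ (\sum_(v : {ffun 'I_d -> 'rV[F]_n})
    (f (v j0) ^+ k.+1 * P v + f (w v) ^+ k.+1 * P v *+ k) / k.+1%:R)).
  apply: ler_sum => v _; rewrite (bigD1 j0) //= -/(P v) -mulrnAl -mulrDl.
  rewrite [leLHS]mulrAC [leRHS]mulrAC; apply: ler_wpM2r; first exact: prodr_ge0.
  exact: young_exp.
rewrite -mulr_suml big_split /= sumrMnl sum_P_j0 sum_P_w -mulrS.
by rewrite -[S *+ _]mulr_natr mulfK ?pnatr_eq0 // mulrC.
Qed.

Lemma sum_prod_mul_prod_lincomb_le (R : realFieldType) (F : finFieldType)
  (n d k : nat) (x : 'I_k -> 'rV[F]_d) (f : 'rV[F]_n -> R) :
  (0 < k)%N -> (forall i, x i != 0) -> (forall u, 0 <= f u) ->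
  \sum_(v : {ffun 'I_d -> 'rV[F]_n})
     ((\prod_j f (v j)) * \prod_i f (\sum_j x i 0 j *: v j))
  <= (\sum_u f u) ^+ d.-1 * \sum_u f u ^+ k.+1.
Proof.
move=> k_gt0 x_neq0 f_ge0.
pose B := (\sum_u f u) ^+ d.-1 * \sum_u f u ^+ k.+1.
apply: (@le_trans _ _ (\sum_(v : {ffun 'I_d -> 'rV[F]_n}) \sum_i
    ((\prod_j f (v j)) * f (\sum_j x i 0 j *: v j) ^+ k) / k%:R)).
  apply: ler_sum => v _; rewrite -mulr_suml -mulr_sumr -mulrA.
  by apply: ler_wpM2l; [exact: prodr_ge0 | exact: prod_le_mean_exp].
rewrite exchange_big /=; under eq_bigr do rewrite -mulr_suml.
rewrite -mulr_suml; apply: (@le_trans _ _ ((\sum_(i < k) B) / k%:R)).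
  apply: ler_wpM2r; first by rewrite invr_ge0 ler0n.
  by apply: ler_sum => i _; exact: sum_prod_mul_lincombX_le.
by rewrite sumr_const card_ord -[B *+ _]mulr_natr mulfK // pnatr_eq0 -lt0n.
Qed.

Section FinLnorm.

Variables (R : realType) (F : finFieldType) (n : nat) (f : 'rV[F]_n -> R).
Hypothesis f_ge0 : forall u, 0 <= f u.

Lemma fin_Lnorm1 : fin_Lnorm f 1 = #|F|%:R ^- n * \sum_u f u.
Proof.
rewrite /fin_Lnorm invr1 powRr1.
  by congr (_ * _); apply: eq_bigr => u _; rewrite powRr1 ?ger0_norm.
by rewrite mulr_ge0 ?invr_ge0 ?exprn_ge0 ?sumr_ge0 // => u _; rewrite powR_ge0.
Qed.

Lemma fin_LnormSX (k : nat) :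
  fin_Lnorm f k.+1%:R ^+ k.+1 = #|F|%:R ^- n * \sum_u f u ^+ k.+1.
Proof.
rewrite /fin_Lnorm -powR_mulrn ?powR_ge0 // -powRrM mulVf ?pnatr_eq0 //.
rewrite powRr1.
  by congr (_ * _); apply: eq_bigr => u _; rewrite powR_mulrn ?ger0_norm.
by rewrite mulr_ge0 ?invr_ge0 ?exprn_ge0 ?sumr_ge0 // => u _; rewrite powR_ge0.
Qed.

End FinLnorm.

Theorem lemmaA2 (R : realType) (F : finFieldType) (n p d : nat)
  (hp : (2 <= p)%N) (hd1 : (1 <= d)%N) (hdp : (d <= p - 1)%N)
  (x : 'I_(p - d) -> 'rV[F]_d) (hx : forall i, x i != 0)
  (f : 'rV[F]_n -> R) (hf : forall v, 0 <= f v) :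
  (#|F|%:R ^- (n * d)) *
    \sum_(v : {ffun 'I_d -> 'rV[F]_n})
       ((\prod_(j < d) f (v j)) *
        \prod_(i < p - d) f (\sum_(j < d) x i 0 j *: v j))
  <= fin_Lnorm f 1 ^+ (d - 1) * fin_Lnorm f (p - d + 1)%:R ^+ (p - d + 1).
Proof.
have k_gt0 : (0 < p - d)%N.
  by rewrite subn_gt0 (leq_ltn_trans hdp) // subn1 ltn_predL (ltnW hp).
rewrite addn1 fin_Lnorm1 // fin_LnormSX // subn1 exprMn mulrACA.
have -> : #|F|%:R ^- (n * d) = (#|F|%:R ^- n) ^+ d.-1 * #|F|%:R ^- n :> R.
  by rewrite -exprSr prednK // exprVn -exprM.
rewrite ler_wpM2l ?mulr_ge0 ?exprn_ge0 ?invr_ge0 ?exprn_ge0 //.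
exact: sum_prod_mul_prod_lincomb_le.
Qed.
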